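(* Fix $\alpha>0$. For each $N\ge 2$, let $T_1,\ldots,T_N$ be drawn independently and uniformly at random (i.e. with replacement) from $\{n\in\mathbb{N}: n\le e^{\alpha N}\}$, and let $\Gamma_{j,k}=\gcd(T_j,T_k)$. Then for every $\eta>0$, \[ \lim_{N\to\infty}\mathbb{P}\Big[N^{2-\eta}<\max_{1\le j<k\le N}\Gamma_{j,k}<N^{2+\eta}\Big]=1 . \] *)

From Stdlib Require Import Reals Lra Lia Arith List.
Open Scope R_scope.

(* M N = floor (exp (alpha * N)) : the sample space for each T_j is
   {n in N : 1 <= n <= exp(alpha N)} = {1, ..., M N}. *)
Definition sampleMax (alpha : R) (N : nat) : nat :=
  Z.to_nat (Int_part (exp (alpha * INR N))).

(* All lists of length N with entries in {1,...,M} (each exactly once):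
   the (M^N)-element uniform sample space of ordered N-tuples. *)
Fixpoint tuples (N M : nat) : list (list nat) :=
  match N with
  | O => nil :: nil
  | S k => flat_map (fun x => map (fun t => x :: t) (tuples k M)) (seq 1 M)
  end.

(* max_{1 <= j < k <= N} gcd(T_j, T_k)  (0 for lists with < 2 entries). *)
Fixpoint maxPairGcd (t : list nat) : nat :=
  match t with
  | nil => 0%nat
  | x :: r => Nat.max (fold_right (fun y acc => Nat.max (Nat.gcd x y) acc) 0%nat r)
                      (maxPairGcd r)
  end.

Definition Rltb (a b : R) : bool := if Rlt_dec a b then true else false.

Definition goodEvent (eta : R) (N : nat) (t : list nat) : bool :=
  Rltb (Rpower (INR N) (2 - eta)) (INR (maxPairGcd t)) &&
  Rltb (INR (maxPairGcd t)) (Rpower (INR N) (2 + eta)).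

Definition probGood (alpha eta : R) (N : nat) : R :=
  INR (length (filter (goodEvent eta N) (tuples N (sampleMax alpha N))))
  / INR (length (tuples N (sampleMax alpha N))).

(* Second-moment method.  Take a of size about N^(2-e) and let X count, over all pairs j < k,
   the d in [a, 2a) dividing both T_j and T_k; X vanishes unless some gcd(T_j, T_k) >= a.
   For samples uniform in {1, ..., M} with M >= 4a we get E X >= N^2 / (64 a), while
   Var X <= N^2 tau + N^3 nu, where tau and nu reduce to gcd sums over [a, 2a) of size
   O(1/a) and O(a^(-3/2)); Chebyshev then bounds P(X = 0) by O(a / N^2 + sqrt a / N).
   For the upper bound, P(gcd(x, y) >= U) <= sum_{g >= U} 1/g^2 <= 2/U, and a union bound
   over the pairs gives P(max gcd >= N^(2+eta)) <= N^(-eta). *)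

From Stdlib Require Import Reals Lra Lia List ZArith.
Open Scope R_scope.

Fixpoint lsum (l : list nat) (f : nat -> R) : R :=
  match l with nil => 0 | x :: r => f x + lsum r f end.

Lemma lsum_ext l f g : (forall x, In x l -> f x = g x) -> lsum l f = lsum l g.
Proof. induction l; simpl; intros H; auto. rewrite H, IHl; auto. Qed.

Lemma lsum_plus l f g : lsum l (fun x => f x + g x) = lsum l f + lsum l g.
Proof. induction l; simpl; lra. Qed.

Lemma lsum_scal l k f : lsum l (fun x => k * f x) = k * lsum l f.
Proof. induction l; simpl; [lra|rewrite IHl; ring]. Qed.

Lemma lsum_const l k : lsum l (fun _ => k) = INR (length l) * k.
Proof. induction l; simpl length; [simpl; lra|]. rewrite S_INR; simpl; rewrite IHl; ring. Qed.

Lemma lsum_le l f g : (forall x, In x l -> f x <= g x) -> lsum l f <= lsum l g.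
Proof. induction l; simpl; intros H; [lra|]. pose proof (H a (or_introl eq_refl)).
  assert (lsum l f <= lsum l g) by auto. lra. Qed.

Lemma lsum_nonneg l f : (forall x, In x l -> 0 <= f x) -> 0 <= lsum l f.
Proof. intros H; rewrite <- (Rmult_0_r (INR (length l))), <- lsum_const; apply lsum_le; auto. Qed.

Lemma lsum_app l1 l2 f : lsum (l1 ++ l2) f = lsum l1 f + lsum l2 f.
Proof. induction l1; simpl; lra. Qed.

Lemma lsum_swap l1 l2 (G : nat -> nat -> R) :
  lsum l1 (fun x => lsum l2 (G x)) = lsum l2 (fun y => lsum l1 (fun x => G x y)).
Proof. induction l1; simpl. - induction l2; simpl; lra.
  - rewrite IHl1, <- lsum_plus. reflexivity. Qed.

Lemma lsum_ge_term l f x : In x l -> (forall y, In y l -> 0 <= f y) -> f x <= lsum l f.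
Proof. induction l; simpl; intros Hi H; [contradiction|]. destruct Hi as [<-|Hi].
  - assert (0 <= lsum l f) by (apply lsum_nonneg; auto). lra.
  - assert (f x <= lsum l f) by auto. pose proof (H a (or_introl eq_refl)). lra. Qed.

Lemma lsum_sqr (l : list nat) f : lsum l f * lsum l f = lsum l (fun y => lsum l (fun z => f y * f z)).
Proof. rewrite <- lsum_scal. apply lsum_ext; intros; rewrite Rmult_comm, <- lsum_scal; reflexivity. Qed.

Definition avg (M : nat) (f : nat -> R) : R := lsum (seq 1 M) f / INR M.

Lemma avg_ext M f g : (forall x, f x = g x) -> avg M f = avg M g.
Proof. intros H; unfold avg; rewrite (lsum_ext _ f g); auto. Qed.

Lemma avg_plus M f g : avg M (fun x => f x + g x) = avg M f + avg M g.
Proof. unfold avg, Rdiv; rewrite lsum_plus; ring. Qed.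

Lemma avg_scal M k f : avg M (fun x => k * f x) = k * avg M f.
Proof. unfold avg, Rdiv; rewrite lsum_scal; ring. Qed.

Lemma avg_scalr M k f : avg M (fun x => f x * k) = avg M f * k.
Proof. rewrite (avg_ext M _ (fun x => k * f x)) by (intros; ring). rewrite avg_scal; ring. Qed.

Lemma avg_const M k : (0 < M)%nat -> avg M (fun _ => k) = k.
Proof. intros HM; unfold avg; rewrite lsum_const, length_seq.
  assert (0 < INR M) by (apply lt_0_INR; lia). field; lra. Qed.

Lemma avg_le M f g : (0 < M)%nat -> (forall x, (1 <= x <= M)%nat -> f x <= g x) -> avg M f <= avg M g.
Proof. intros HM H; unfold avg, Rdiv. assert (0 < INR M) by (apply lt_0_INR; lia).
  apply Rmult_le_compat_r. left; apply Rinv_0_lt_compat; lra.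
  apply lsum_le. intros x Hx; apply in_seq in Hx; apply H; lia. Qed.

Lemma avg_swap M N (G : nat -> nat -> R) :
  avg M (fun x => avg N (G x)) = avg N (fun y => avg M (fun x => G x y)).
Proof. unfold avg, Rdiv.
  rewrite (lsum_ext _ (fun x => lsum (seq 1 N) (G x) * / INR N) (fun x => / INR N * lsum (seq 1 N) (G x)))
   by (intros; ring).
  rewrite lsum_scal, lsum_swap.
  rewrite (lsum_ext (seq 1 N) (fun x => lsum (seq 1 M) (fun x0 => G x0 x) * / INR M)
        (fun x => / INR M * lsum (seq 1 M) (fun x0 => G x0 x))) by (intros; ring).
  rewrite lsum_scal. ring. Qed.

Lemma avg_lsum M l (F : nat -> nat -> R) :
  avg M (fun y => lsum l (F y)) = lsum l (fun z => avg M (fun y => F y z)).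
Proof. induction l; simpl. - unfold avg; rewrite (lsum_ext _ _ (fun _ => 0*0)) by (intros; ring).
  rewrite lsum_scal; unfold Rdiv; ring.
  - rewrite avg_plus, IHl. reflexivity. Qed.

Lemma avg_nonneg M f : (0 < M)%nat -> (forall x, (1 <= x <= M)%nat -> 0 <= f x) -> 0 <= avg M f.
Proof. intros HM H; rewrite <- (avg_const M 0 HM); apply avg_le; auto. Qed.

Fixpoint expect (M n : nat) (F : list nat -> R) : R :=
  match n with O => F nil | S k => avg M (fun x => expect M k (fun t => F (x :: t))) end.

Lemma expect_ext M n F G : (forall t, F t = G t) -> expect M n F = expect M n G.
Proof. revert F G; induction n; simpl; intros F G H; auto. apply avg_ext; intros; apply IHn; auto. Qed.

Lemma expect_plus M n F G : expect M n (fun t => F t + G t) = expect M n F + expect M n G.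
Proof. revert F G; induction n; simpl; intros; auto. rewrite <- avg_plus; apply avg_ext; intros; apply IHn. Qed.

Lemma expect_scal M n k F : expect M n (fun t => k * F t) = k * expect M n F.
Proof. revert F; induction n; simpl; intros; auto. rewrite <- avg_scal; apply avg_ext; intros; apply IHn. Qed.

Lemma expect_const M n k : (0 < M)%nat -> expect M n (fun _ => k) = k.
Proof. intros HM; induction n; simpl; auto. rewrite (avg_ext _ _ (fun _ => k)) by auto. apply avg_const; auto. Qed.

Lemma expect_le M n F G : (0 < M)%nat -> (forall t, F t <= G t) -> expect M n F <= expect M n G.
Proof. intros HM; revert F G; induction n; simpl; intros F G H; auto. apply avg_le; auto. Qed.

Lemma expect_lsum_swap M n l (F : nat -> list nat -> R) :
  expect M n (fun t => lsum l (fun d => F d t)) = lsum l (fun d => expect M n (F d)).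
Proof. revert F; induction n; simpl; intros; auto.
  rewrite (avg_ext _ _ (fun x => lsum l (fun d => expect M n (fun t => F d (x :: t))))) by (intros; apply IHn).
  apply avg_lsum. Qed.

Lemma expect_avg M n (G : nat -> list nat -> R) :
  expect M n (fun t => avg M (fun y => G y t)) = avg M (fun y => expect M n (G y)).
Proof. unfold avg. rewrite (expect_ext _ _ _ (fun t => / INR M * lsum (seq 1 M) (fun y => G y t)))
  by (intros; unfold Rdiv; ring). rewrite expect_scal, expect_lsum_swap. unfold Rdiv; ring. Qed.

Fixpoint tsum (l : list (list nat)) (F : list nat -> R) : R :=
  match l with nil => 0 | t :: r => F t + tsum r F end.

Lemma tsum_app l1 l2 F : tsum (l1 ++ l2) F = tsum l1 F + tsum l2 F.
Proof. induction l1; simpl; lra. Qed.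

Lemma tsum_map x l F : tsum (map (fun t => x :: t) l) F = tsum l (fun t => F (x :: t)).
Proof. induction l; simpl; auto. rewrite IHl; auto. Qed.

Lemma tsum_flat l k M F :
  tsum (flat_map (fun x => map (fun t => x :: t) (tuples k M)) l) F
  = lsum l (fun x => tsum (tuples k M) (fun t => F (x :: t))).
Proof. induction l; simpl; auto. rewrite tsum_app, tsum_map, IHl; auto. Qed.

Lemma tsum_tuples M n F : (0 < M)%nat -> tsum (tuples n M) F = INR M ^ n * expect M n F.
Proof. intros HM. assert (0 < INR M) by (apply lt_0_INR; lia). revert F; induction n; intros F.
  - simpl; ring.
  - simpl tuples; rewrite tsum_flat. simpl expect. unfold avg.
    rewrite (lsum_ext _ _ (fun x => INR M ^ n * expect M n (fun t => F (x :: t)))) by (intros; apply IHn).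
    rewrite lsum_scal. simpl pow. field. lra. Qed.

Lemma length_filter_tsum (p : list nat -> bool) l :
  INR (length (filter p l)) = tsum l (fun t => if p t then 1 else 0).
Proof. induction l; [simpl; auto|]. cbn [filter tsum]. destruct (p a); cbn [length]; rewrite <- IHl; [rewrite S_INR|]; ring. Qed.

Lemma length_tsum (l : list (list nat)) : INR (length l) = tsum l (fun _ => 1).
Proof. induction l; [simpl; auto|]. cbn [length tsum]. rewrite S_INR, IHl; ring. Qed.

Lemma probGood_expect alpha eta N : (0 < sampleMax alpha N)%nat ->
  probGood alpha eta N = expect (sampleMax alpha N) N (fun t => if goodEvent eta N t then 1 else 0).
Proof. intros HM. unfold probGood. rewrite length_filter_tsum, length_tsum, !tsum_tuples by auto.
  rewrite expect_const by auto. assert (0 < INR (sampleMax alpha N)) by (apply lt_0_INR; lia).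
  field. apply pow_nonzero; lra. Qed.

Fixpoint pairSum (c : nat -> nat -> R) (t : list nat) : R :=
  match t with nil => 0 | x :: r => lsum r (c x) + pairSum c r end.

Lemma expect_lsum M n f : (0 < M)%nat -> expect M n (fun t => lsum t f) = INR n * avg M f.
Proof. intros HM; induction n; simpl; [ring|].
  rewrite (avg_ext _ _ (fun x => f x + INR n * avg M f)).
  2:{ intros x. rewrite expect_plus, expect_const, IHn; auto. }
  rewrite avg_plus, avg_const by auto. destruct n; simpl; ring. Qed.

Lemma expect_lsum_lsum M n (g : nat -> nat -> R) : (0 < M)%nat ->
  expect M n (fun t => lsum t (fun y => lsum t (g y))) =
  INR n * avg M (fun y => g y y) + INR n * (INR n - 1) * avg M (fun y => avg M (g y)).
Proof. intros HM; induction n; simpl expect; [simpl; ring|].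
  rewrite (avg_ext _ _ (fun x => g x x + INR n * avg M (g x) + INR n * avg M (fun y => g y x)
      + (INR n * avg M (fun y => g y y) + INR n * (INR n - 1) * avg M (fun y => avg M (g y))))).
  2:{ intros x. rewrite <- IHn.
      rewrite (expect_ext _ _ _ (fun t => g x x + lsum t (g x) + lsum t (fun y => g y x)
               + lsum t (fun y => lsum t (g y)))).
      2:{ intros t; simpl. rewrite lsum_plus. ring. }
      rewrite !expect_plus, expect_const, !expect_lsum by auto. ring. }
  rewrite !avg_plus, !avg_scal, !avg_const by auto.
  rewrite (avg_swap M M (fun x y => g y x)). replace (avg M (fun y => avg M (fun x => g y x))) with (avg M (fun y => avg M (g y))) by reflexivity. rewrite S_INR; ring. Qed.

Lemma expect_pairSum M n c : (0 < M)%nat ->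
  expect M n (pairSum c) = INR n * (INR n - 1) / 2 * avg M (fun x => avg M (c x)).
Proof. intros HM; induction n; simpl expect; [simpl; field|].
  rewrite (avg_ext _ _ (fun x => INR n * avg M (c x) + INR n * (INR n - 1) / 2 * avg M (fun x => avg M (c x)))).
  2:{ intros x. simpl. rewrite expect_plus, expect_lsum, IHn by auto. reflexivity. }
  rewrite avg_plus, avg_scal, avg_const by auto. rewrite S_INR; field. Qed.

Lemma avg_avg_mul M f g : avg M (fun y => avg M (fun z => f y * g z)) = avg M f * avg M g.
Proof. rewrite (avg_ext _ _ (fun y => f y * avg M g)) by (intros; apply avg_scal).
  apply avg_scalr. Qed.

Lemma expect_lsum_mul_pairSum M n c : (0 < M)%nat -> (forall x y, c x y = c y x) ->
  let h := fun y => avg M (c y) in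
  expect M n (fun t => lsum t h * pairSum c t) =
  INR n * (INR n - 1) * avg M (fun y => h y * h y)
  + INR n * (INR n - 1) * (INR n - 2) / 2 * (avg M h * avg M h).
Proof. intros HM Hsym h; induction n; simpl expect; [simpl; field|].
  set (nu := avg M (fun y => h y * h y)). set (mu := avg M h).
  assert (Hsw : forall r, avg M (fun y => lsum r h * lsum r (c y)) = lsum r h * lsum r h).
  { intros r. rewrite avg_scal, avg_lsum. f_equal. apply lsum_ext; intros z _. unfold h.
    apply avg_ext; intros; apply Hsym. }
  rewrite (avg_ext _ _ (fun y => (h y * (INR n * h y) + h y * (INR n * (INR n - 1) / 2 * mu))
     + expect M n (fun r => lsum r h * lsum r (c y)) + expect M n (fun r => lsum r h * pairSum c r))).
  2:{ intros y. simpl.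
      rewrite (expect_ext _ _ _ (fun t => h y * lsum t (c y) + h y * pairSum c t + lsum t h * lsum t (c y)
              + lsum t h * pairSum c t)) by (intros; ring).
      rewrite !expect_plus, !expect_scal, expect_lsum, expect_pairSum by auto. reflexivity. }
  rewrite !avg_plus. rewrite <- expect_avg.
  rewrite (expect_ext _ _ _ (fun t => lsum t (fun y => lsum t (fun z => h y * h z)))).
  2:{ intros t. rewrite Hsw. rewrite <- lsum_scal.
      apply lsum_ext; intros; rewrite Rmult_comm, <- lsum_scal. reflexivity. }
  rewrite expect_lsum_lsum, IHn by auto. rewrite avg_const by auto.
  rewrite avg_avg_mul.
  rewrite (avg_ext _ (fun x => h x * (INR n * h x)) (fun x => INR n * (h x * h x))) by (intros; ring).
  rewrite (avg_ext _ (fun x => h x * (INR n * (INR n - 1) / 2 * mu)) (fun x => (INR n * (INR n - 1) / 2 * mu) * h x)) by (intros; ring).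
  rewrite !avg_scal. fold nu mu. rewrite S_INR. field. Qed.

Lemma expect_pairSum_sqr M n c : (0 < M)%nat -> (forall x y, c x y = c y x) ->
  let h := fun y => avg M (c y) in
  expect M n (fun t => pairSum c t * pairSum c t) =
  INR n * (INR n - 1) / 2 * avg M (fun x => avg M (fun y => c x y * c x y))
  + INR n * (INR n - 1) * (INR n - 2) * avg M (fun y => h y * h y)
  + INR n * (INR n - 1) * (INR n - 2) * (INR n - 3) / 4 * (avg M h * avg M h).
Proof. intros HM Hsym h; induction n; simpl expect; [simpl; field|].
  set (nu := avg M (fun y => h y * h y)). set (mu := avg M h).
  set (tau := avg M (fun x => avg M (fun y => c x y * c x y))).
  rewrite (avg_ext _ _ (fun x => (INR n * avg M (fun y => c x y * c x y) + INR n * (INR n - 1) * (h x * h x))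
     + 2 * expect M n (fun r => lsum r (c x) * pairSum c r) + expect M n (fun r => pairSum c r * pairSum c r))).
  2:{ intros x. simpl.
      rewrite (expect_ext _ _ _ (fun t => lsum t (fun y => lsum t (fun z => c x y * c x z))
          + 2 * (lsum t (c x) * pairSum c t) + pairSum c t * pairSum c t)).
      2:{ intros t. rewrite <- (lsum_sqr t (c x)). ring. }
      rewrite !expect_plus, expect_scal, expect_lsum_lsum by auto. rewrite avg_avg_mul. reflexivity. }
  rewrite !avg_plus, !avg_scal. rewrite <- expect_avg.
  rewrite (expect_ext _ _ _ (fun t => lsum t h * pairSum c t)).
  2:{ intros t. rewrite avg_scalr, avg_lsum. f_equal. apply lsum_ext; intros z _. unfold h.
      apply avg_ext; intros; apply Hsym. }
  pose proof (expect_lsum_mul_pairSum M n c HM Hsym) as H6; cbv zeta in H6; change (fun y => avg M (c y)) with h in H6. rewrite H6, IHn. fold h nu mu tau. rewrite avg_const by auto. rewrite S_INR. field. Qed.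

Lemma pairSum_nonneg c t : (forall x y, 0 <= c x y) -> 0 <= pairSum c t.
Proof. intros Hc; induction t; simpl; [lra|]. assert (0 <= lsum t (c a)) by (apply lsum_nonneg; auto). lra. Qed.

Definition divInd (d x : nat) : R := if andb (Nat.ltb 0 x) (Nat.eqb (x mod d) 0) then 1 else 0.

Lemma divInd_bounds d x : 0 <= divInd d x <= 1.
Proof. unfold divInd; destruct (andb _ _); lra. Qed.

Lemma divInd_eq1_iff d x : divInd d x = 1 <-> (0 < x)%nat /\ Nat.divide d x.
Proof.
  unfold divInd.
  destruct (Nat.ltb_spec 0 x) as [Hx|Hx]; destruct (Nat.eqb_spec (x mod d) 0) as [E|E];
    rewrite Nat.Lcm0.mod_divide in E; simpl; split; intros H; try lra; try tauto; lia.
Qed.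

Lemma divInd_cases d x : divInd d x = 0 \/ divInd d x = 1.
Proof. unfold divInd; destruct (andb _ _); auto. Qed.

Lemma div_succ m d : (0 < d)%nat ->
  (S m / d = m / d + (if Nat.eqb (S m mod d) 0 then 1 else 0))%nat.
Proof. intros Hd. pose proof (Nat.div_mod m d ltac:(lia)). pose proof (Nat.mod_upper_bound m d ltac:(lia)).
  set (q := (m / d)%nat) in *. set (r := (m mod d)%nat) in *.
  destruct (Nat.eq_dec (S r) d) as [E|E].
  - assert (S m = d * (q + 1))%nat by lia.
    assert (S m mod d = 0)%nat by (rewrite H1, Nat.mul_comm; apply Nat.Div0.mod_mul).
    rewrite H2; simpl. rewrite H1, Nat.mul_comm, Nat.div_mul by lia. lia.
  - assert (S m = d * q + S r)%nat by lia.
    assert (S m mod d = S r)%nat by (rewrite H1; symmetry; apply (Nat.mod_unique _ _ q); lia).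
    assert (S m / d = q)%nat by (rewrite H1; symmetry; apply (Nat.div_unique _ _ _ (S r)); lia).
    rewrite H2, H3. destruct (Nat.eqb_spec (S r) 0); lia. Qed.

Lemma lsum_divInd M d : (0 < d)%nat -> lsum (seq 1 M) (divInd d) = INR (M / d).
Proof. intros Hd; induction M.
  - simpl. rewrite Nat.Div0.div_0_l. simpl; auto.
  - rewrite seq_S, lsum_app, IHM. simpl lsum. rewrite (div_succ M d Hd), plus_INR.
    unfold divInd. replace (1 + M)%nat with (S M) by lia. simpl Nat.ltb. simpl andb.
    destruct (Nat.eqb (S M mod d) 0); simpl; ring. Qed.

Lemma mul_div_le_INR K g : (0 < g)%nat -> INR g * INR (K / g) <= INR K.
Proof. intros Hg. rewrite <- mult_INR. apply le_INR. apply Nat.Div0.mul_div_le. Qed.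

Lemma avg_divInd_le M d : (0 < M)%nat -> (0 < d)%nat -> avg M (divInd d) <= / INR d.
Proof. intros HM Hd; unfold avg; rewrite lsum_divInd by auto.
  assert (0 < INR M) by (apply lt_0_INR; lia). assert (0 < INR d) by (apply lt_0_INR; lia).
  pose proof (Nat.Div0.mul_div_le M d) as H1. apply le_INR in H1. rewrite mult_INR in H1.
  apply (Rmult_le_reg_r (INR M * INR d)). nra. field_simplify; try lra. Qed.

Lemma avg_divInd_ge M d : (0 < M)%nat -> (0 < d)%nat -> / INR d - / INR M <= avg M (divInd d).
Proof. intros HM Hd; unfold avg; rewrite lsum_divInd by auto.
  assert (0 < INR M) by (apply lt_0_INR; lia). assert (0 < INR d) by (apply lt_0_INR; lia).
  pose proof (Nat.div_mod M d ltac:(lia)) as H2. pose proof (Nat.mod_upper_bound M d ltac:(lia)) as H3.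
  assert (H4 : (M < d * (M / d) + d)%nat) by lia. apply lt_INR in H4. rewrite plus_INR, mult_INR in H4.
  apply (Rmult_le_reg_r (INR M * INR d)). nra. field_simplify; try lra. Qed.

Lemma divInd_mul d d' x : divInd d x * divInd d' x = divInd (Nat.lcm d d') x.
Proof.
  assert (Hiff : divInd (Nat.lcm d d') x = 1 <-> divInd d x = 1 /\ divInd d' x = 1)
    by (rewrite !divInd_eq1_iff, Nat.lcm_divide_iff; tauto).
  destruct (divInd_cases d x) as [E1|E1], (divInd_cases d' x) as [E2|E2],
    (divInd_cases (Nat.lcm d d') x) as [E|E]; rewrite E1, E2, E in *; try ring;
    destruct Hiff as [Hf Hb].
  all: first [destruct (Hf eq_refl); lra | specialize (Hb (conj eq_refl eq_refl)); lra].
Qed.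

Lemma gcd_mul_lcm d d' : (0 < d')%nat -> (Nat.gcd d d' * Nat.lcm d d' = d * d')%nat.
Proof. intros Hd'. destruct (Nat.gcd_divide_r d d') as [k Hk].
  assert (Hg : Nat.gcd d d' <> 0%nat) by (intros E; apply Nat.gcd_eq_0 in E; lia).
  unfold Nat.lcm. rewrite Hk at 2. rewrite Nat.div_mul by auto. rewrite Hk at 2. ring. Qed.

Lemma inv_lcm_eq d d' : (0 < d)%nat -> (0 < d')%nat ->
  / INR (Nat.lcm d d') = INR (Nat.gcd d d') / (INR d * INR d').
Proof. intros Hd Hd'. pose proof (gcd_mul_lcm d d' Hd'). apply (f_equal INR) in H. rewrite !mult_INR in H.
  assert (0 < INR d) by (apply lt_0_INR; lia). assert (0 < INR d') by (apply lt_0_INR; lia).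
  assert (INR (Nat.lcm d d') <> 0).
  { intros E. rewrite E in H. nra. }
  field_simplify_eq; auto. lra. split; lra. Qed.

Lemma lcm_pos d d' : (0 < d)%nat -> (0 < d')%nat -> (0 < Nat.lcm d d')%nat.
Proof. intros. destruct (Nat.eq_dec (Nat.lcm d d') 0) as [E|E]; [|lia]. apply Nat.lcm_eq_0 in E. lia. Qed.

Lemma inv_lcm_le a d d' : (0 < a)%nat -> In d (seq a a) -> In d' (seq a a) ->
  / INR (Nat.lcm d d') <= INR (Nat.gcd d d') / (INR a * INR a).
Proof. intros Ha Hd Hd'. apply in_seq in Hd, Hd'. rewrite inv_lcm_eq by lia.
  assert (0 < INR a) by (apply lt_0_INR; lia).
  assert (INR a <= INR d) by (apply le_INR; lia). assert (INR a <= INR d') by (apply le_INR; lia).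
  unfold Rdiv. apply Rmult_le_compat_l; [apply pos_INR|]. apply Rinv_le_contravar; nra. Qed.

Definition commonDiv (a : nat) (x y : nat) : R := lsum (seq a a) (fun d => divInd d x * divInd d y).

Lemma commonDiv_sym a x y : commonDiv a x y = commonDiv a y x.
Proof. unfold commonDiv; apply lsum_ext; intros; ring. Qed.

Lemma in_seq_pos a d : (0 < a)%nat -> In d (seq a a) -> (0 < d)%nat.
Proof. intros Ha H; apply in_seq in H; lia. Qed.

Lemma avg_commonDiv M a y : avg M (commonDiv a y) = lsum (seq a a) (fun d => divInd d y * avg M (divInd d)).
Proof. unfold commonDiv. rewrite avg_lsum. apply lsum_ext; intros. apply avg_scal. Qed.

Lemma mean_commonDiv M a : avg M (fun y => avg M (commonDiv a y)) = lsum (seq a a) (fun d => avg M (divInd d) * avg M (divInd d)).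
Proof. rewrite (avg_ext _ _ _ (avg_commonDiv M a)). rewrite avg_lsum. apply lsum_ext; intros.
  apply avg_scalr. Qed.

Lemma mean_commonDiv_ge M a : (0 < a)%nat -> (4 * a <= M)%nat ->
  / (16 * INR a) <= avg M (fun y => avg M (commonDiv a y)).
Proof. intros Ha HM. rewrite mean_commonDiv.
  assert (0 < INR a) by (apply lt_0_INR; lia).
  assert (4 * INR a <= INR M) by (replace 4 with (INR 4) by (simpl; ring); rewrite <- mult_INR; apply le_INR; lia).
  apply Rle_trans with (lsum (seq a a) (fun _ => / (4 * INR a) * / (4 * INR a))).
  - rewrite lsum_const, length_seq. right; field; lra.
  - apply lsum_le. intros d Hd. apply in_seq in Hd.
    assert (0 < INR d) by (apply lt_0_INR; lia).
    assert (INR d <= 2 * INR a) by (replace 2 with (INR 2) by (simpl; ring); rewrite <- mult_INR; apply le_INR; lia).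
    pose proof (avg_divInd_ge M d ltac:(lia) ltac:(lia)).
    assert (/ (4 * INR a) <= / INR d - / INR M).
    { assert (/ INR M <= / (4 * INR a)) by (apply Rinv_le_contravar; lra).
      assert (/ (2 * INR a) <= / INR d) by (apply Rinv_le_contravar; lra).
      assert (/ (2 * INR a) = 2 * / (4 * INR a)) by (field; lra). lra. }
    assert (0 <= / (4 * INR a)) by (left; apply Rinv_0_lt_compat; lra).
    apply Rmult_le_compat; lra. Qed.

Lemma lsum_seq_le_double a f : (0 < a)%nat -> (forall x, 0 <= f x) ->
  lsum (seq a a) f <= lsum (seq 1 (2 * a)) f.
Proof. intros Ha Hf. replace (2 * a)%nat with ((a - 1) + (a + 1))%nat by lia.
  rewrite seq_app, lsum_app. replace (1 + (a - 1))%nat with a by lia.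
  replace (a + 1)%nat with (a + 1)%nat by lia. rewrite seq_app, lsum_app.
  assert (0 <= lsum (seq 1 (a - 1)) f) by (apply lsum_nonneg; auto).
  assert (0 <= lsum (seq (a + a) 1) f) by (apply lsum_nonneg; auto). lra. Qed.

Lemma weight_gcd_le_lsum K (w : nat -> R) d d' : (0 < d)%nat -> (0 < d')%nat -> (d <= K)%nat ->
  (forall g, 0 <= w g) ->
  w (Nat.gcd d d') <= lsum (seq 1 K) (fun g => w g * (divInd g d * divInd g d')).
Proof.
  intros Hd Hd' HdK Hw.
  assert (Hg : (0 < Nat.gcd d d')%nat).
  { destruct (Nat.eq_dec (Nat.gcd d d') 0) as [E|E]; [apply Nat.gcd_eq_0 in E; lia|lia]. }
  assert (Hgd : (Nat.gcd d d' <= d)%nat) by (apply Nat.divide_pos_le; [lia|apply Nat.gcd_divide_l]).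
  assert (E1 : divInd (Nat.gcd d d') d = 1) by (apply divInd_eq1_iff; split; [lia|apply Nat.gcd_divide_l]).
  assert (E2 : divInd (Nat.gcd d d') d' = 1) by (apply divInd_eq1_iff; split; [lia|apply Nat.gcd_divide_r]).
  eapply Rle_trans; [|apply (lsum_ge_term _ _ (Nat.gcd d d'))].
  - cbv beta; rewrite E1, E2; lra.
  - apply in_seq; lia.
  - intros y _. pose proof (divInd_bounds y d); pose proof (divInd_bounds y d'); pose proof (Hw y).
    apply Rmult_le_pos; auto; nra.
Qed.

Lemma lsum_weighted_gcd_le a (w : nat -> R) : (0 < a)%nat -> (forall g, 0 <= w g) ->
  lsum (seq a a) (fun d => lsum (seq a a) (fun d' => w (Nat.gcd d d')))
  <= lsum (seq 1 (2 * a)) (fun g => w g * (INR (2 * a / g) * INR (2 * a / g))).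
Proof. intros Ha Hw.
  apply Rle_trans with (lsum (seq a a) (fun d => lsum (seq a a) (fun d' =>
      lsum (seq 1 (2 * a)) (fun g => w g * (divInd g d * divInd g d'))))).
  { apply lsum_le; intros d Hd; apply lsum_le; intros d' Hd'.
    apply in_seq in Hd, Hd'. apply weight_gcd_le_lsum; auto; lia. }
  rewrite (lsum_ext _ _ (fun d => lsum (seq 1 (2 * a)) (fun g => lsum (seq a a) (fun d' => w g * (divInd g d * divInd g d')))))
    by (intros; apply lsum_swap).
  rewrite lsum_swap. apply lsum_le; intros g Hg. apply in_seq in Hg.
  rewrite (lsum_ext _ _ (fun d => (w g * divInd g d) * lsum (seq a a) (divInd g))).
  2:{ intros; rewrite <- lsum_scal; apply lsum_ext; intros; ring. }
  rewrite (lsum_ext _ _ (fun d => (w g * lsum (seq a a) (divInd g)) * divInd g d)) by (intros; ring).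
  rewrite lsum_scal.
  assert (H1 : lsum (seq a a) (divInd g) <= INR (2 * a / g)).
  { rewrite <- lsum_divInd by lia. apply lsum_seq_le_double; auto. intros; apply divInd_bounds. }
  assert (H0 : 0 <= lsum (seq a a) (divInd g)) by (apply lsum_nonneg; intros; apply divInd_bounds).
  pose proof (Hw g). assert (0 <= w g * lsum (seq a a) (divInd g)) by nra.
  apply Rle_trans with (w g * lsum (seq a a) (divInd g) * INR (2 * a / g)).
  - apply Rmult_le_compat_l; auto.
  - rewrite <- Rmult_assoc. apply Rmult_le_compat_r; [apply pos_INR|]. apply Rmult_le_compat_l; auto. Qed.

Lemma avg_commonDiv_bounds M a y : (0 < M)%nat -> (0 < a)%nat ->
  0 <= avg M (commonDiv a y) <= / INR a * lsum (seq a a) (fun d => divInd d y).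
Proof. intros HM Ha. rewrite avg_commonDiv. assert (0 < INR a) by (apply lt_0_INR; lia). split.
  - apply lsum_nonneg; intros d Hd. pose proof (divInd_bounds d y).
    apply Rmult_le_pos; [lra|]. apply avg_nonneg; auto; intros; apply divInd_bounds.
  - rewrite <- lsum_scal. apply lsum_le; intros d Hd. apply in_seq in Hd.
    pose proof (divInd_bounds d y). pose proof (avg_divInd_le M d HM ltac:(lia)).
    assert (/ INR d <= / INR a) by (apply Rinv_le_contravar; auto; apply le_INR; lia).
    rewrite Rmult_comm. apply Rmult_le_compat_r; lra. Qed.

Lemma mean_sqr_avg_commonDiv_le_gcd M a : (0 < M)%nat -> (0 < a)%nat ->
  avg M (fun y => avg M (commonDiv a y) * avg M (commonDiv a y)) <=
  / (INR a * INR a * INR a * INR a) *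
  lsum (seq a a) (fun d => lsum (seq a a) (fun d' => INR (Nat.gcd d d'))).
Proof. intros HM Ha. assert (0 < INR a) by (apply lt_0_INR; lia).
  apply Rle_trans with (avg M (fun y => / (INR a * INR a) *
     lsum (seq a a) (fun d => lsum (seq a a) (fun d' => divInd (Nat.lcm d d') y)))).
  { apply avg_le; auto. intros y _. destruct (avg_commonDiv_bounds M a y HM Ha) as [H0 H1].
    apply Rle_trans with ((/ INR a * lsum (seq a a) (fun d => divInd d y)) * (/ INR a * lsum (seq a a) (fun d => divInd d y))).
    { apply Rmult_le_compat; lra. }
    right. rewrite Rinv_mult.
    replace (/ INR a * lsum (seq a a) (fun d => divInd d y) * (/ INR a * lsum (seq a a) (fun d => divInd d y)))
      with (/ INR a * / INR a * (lsum (seq a a) (fun d => divInd d y) * lsum (seq a a) (fun d => divInd d y))) by ring.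
    f_equal. rewrite lsum_sqr. apply lsum_ext; intros d Hd; apply lsum_ext; intros d' Hd'.
    apply divInd_mul. }
  rewrite avg_scal, avg_lsum. rewrite (lsum_ext _ _ (fun d => lsum (seq a a) (fun d' => avg M (divInd (Nat.lcm d d')))))
    by (intros; apply avg_lsum).
  replace (/ (INR a * INR a * INR a * INR a)) with (/ (INR a * INR a) * / (INR a * INR a)) by (field; lra).
  rewrite Rmult_assoc. apply Rmult_le_compat_l. { left; apply Rinv_0_lt_compat; nra. }
  rewrite <- lsum_scal. apply lsum_le; intros d Hd. rewrite <- lsum_scal. apply lsum_le; intros d' Hd'.
  pose proof (in_seq_pos a d Ha Hd). pose proof (in_seq_pos a d' Ha Hd').
  eapply Rle_trans. apply avg_divInd_le; auto. apply lcm_pos; auto.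
  eapply Rle_trans. apply (inv_lcm_le a d d'); auto. right; unfold Rdiv; ring. Qed.

Lemma mean_sqr_commonDiv_le_gcd M a : (0 < M)%nat -> (0 < a)%nat ->
  avg M (fun x => avg M (fun y => commonDiv a x y * commonDiv a x y)) <=
  / (INR a * INR a * INR a * INR a) *
  lsum (seq a a) (fun d => lsum (seq a a) (fun d' => INR (Nat.gcd d d') * INR (Nat.gcd d d'))).
Proof. intros HM Ha. assert (0 < INR a) by (apply lt_0_INR; lia).
  rewrite (avg_ext _ _ (fun x => avg M (fun y => lsum (seq a a) (fun d => lsum (seq a a) (fun d' =>
        divInd (Nat.lcm d d') x * divInd (Nat.lcm d d') y))))).
  2:{ intros x. apply avg_ext; intros y. unfold commonDiv. rewrite lsum_sqr.
      apply lsum_ext; intros d _; apply lsum_ext; intros d' _.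
      rewrite <- !divInd_mul. ring. }
  rewrite (avg_ext _ _ (fun x => lsum (seq a a) (fun d => lsum (seq a a) (fun d' =>
        avg M (fun y => divInd (Nat.lcm d d') x * divInd (Nat.lcm d d') y))))).
  2:{ intros x. rewrite avg_lsum. apply lsum_ext; intros; apply avg_lsum. }
  rewrite avg_lsum. rewrite (lsum_ext _ _ (fun d => lsum (seq a a) (fun d' =>
        avg M (fun x => avg M (fun y => divInd (Nat.lcm d d') x * divInd (Nat.lcm d d') y))))) by (intros; apply avg_lsum).
  rewrite <- lsum_scal. apply lsum_le; intros d Hd. rewrite <- lsum_scal. apply lsum_le; intros d' Hd'.
  pose proof (in_seq_pos a d Ha Hd). pose proof (in_seq_pos a d' Ha Hd').
  rewrite avg_avg_mul. pose proof (lcm_pos d d' H0 H1).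
  pose proof (avg_divInd_le M _ HM H2). assert (0 <= avg M (divInd (Nat.lcm d d'))) by (apply avg_nonneg; auto; intros; apply divInd_bounds).
  pose proof (inv_lcm_le a d d' Ha Hd Hd').
  apply Rle_trans with ((INR (Nat.gcd d d') / (INR a * INR a)) * (INR (Nat.gcd d d') / (INR a * INR a))).
  - apply Rmult_le_compat; lra.
  - right; field; lra. Qed.

Lemma lsum_sqr_gcd_le a : (0 < a)%nat ->
  lsum (seq a a) (fun d => lsum (seq a a) (fun d' => INR (Nat.gcd d d') * INR (Nat.gcd d d')))
  <= 8 * (INR a * INR a * INR a).
Proof. intros Ha. eapply Rle_trans. apply (lsum_weighted_gcd_le a (fun g => INR g * INR g)); auto.
  { intros; apply Rmult_le_pos; apply pos_INR. }
  apply Rle_trans with (lsum (seq 1 (2 * a)) (fun _ => INR (2 * a) * INR (2 * a))).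
  - apply lsum_le; intros g Hg. apply in_seq in Hg.
    pose proof (mul_div_le_INR (2 * a) g ltac:(lia)). pose proof (pos_INR g). pose proof (pos_INR (2 * a / g)).
    replace (INR g * INR g * (INR (2 * a / g) * INR (2 * a / g))) with
      ((INR g * INR (2 * a / g)) * (INR g * INR (2 * a / g))) by ring.
    apply Rmult_le_compat; nra.
  - rewrite lsum_const, length_seq, mult_INR. simpl. lra. Qed.

Definition harmonic (K : nat) : R := lsum (seq 1 K) (fun g => / INR g).

Lemma lsum_gcd_le a : (0 < a)%nat ->
  lsum (seq a a) (fun d => lsum (seq a a) (fun d' => INR (Nat.gcd d d')))
  <= 4 * (INR a * INR a) * harmonic (2 * a).
Proof. intros Ha. eapply Rle_trans. apply (lsum_weighted_gcd_le a (fun g => INR g)); auto.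
  { intros; apply pos_INR. }
  unfold harmonic. rewrite <- lsum_scal. apply lsum_le; intros g Hg. apply in_seq in Hg.
  pose proof (mul_div_le_INR (2 * a) g ltac:(lia)). pose proof (pos_INR (2 * a / g)).
  assert (0 < INR g) by (apply lt_0_INR; lia).
  rewrite mult_INR in H. simpl (INR 2) in H.
  apply (Rmult_le_reg_l (INR g)); auto.
  replace (INR g * (INR g * (INR (2 * a / g) * INR (2 * a / g)))) with
      ((INR g * INR (2 * a / g)) * (INR g * INR (2 * a / g))) by ring.
  replace (INR g * (4 * (INR a * INR a) * / INR g)) with ((2 * INR a) * (2 * INR a)) by (field; lra).
  apply Rmult_le_compat; nra. Qed.

Lemma harmonic_le_sqrt K : harmonic K <= 2 * sqrt (INR K).
Proof. induction K. - unfold harmonic; simpl. rewrite sqrt_0; lra.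
  - unfold harmonic in *. rewrite seq_S, lsum_app. cbn [lsum]. replace (1 + K)%nat with (S K) by lia.
    rewrite S_INR. pose proof (pos_INR K).
    assert (Hs1 : sqrt (INR K) <= sqrt (INR K + 1)) by (apply sqrt_le_1; lra).
    assert (Hs2 : 0 <= sqrt (INR K)) by apply sqrt_pos.
    assert (Hs3 : sqrt (INR K + 1) * sqrt (INR K + 1) = INR K + 1) by (apply sqrt_sqrt; lra).
    assert (Hs4 : sqrt (INR K) * sqrt (INR K) = INR K) by (apply sqrt_sqrt; lra).
    assert (1 <= sqrt (INR K + 1)) by (apply (Rle_trans _ (sqrt 1)); [rewrite sqrt_1; lra| apply sqrt_le_1; lra]).
    assert (/ (INR K + 1) <= 2 * (sqrt (INR K + 1) - sqrt (INR K))).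
    { set (u := sqrt (INR K + 1)) in *. set (v := sqrt (INR K)) in *.
      assert (u - v = / (u + v)) by (field_simplify_eq; nra).
      rewrite H1. apply (Rmult_le_reg_l (u+v)); [lra|].
      replace ((u + v) * (2 * / (u + v))) with 2 by (field; lra).
      rewrite <- Hs3. apply (Rmult_le_reg_l (u*u)); [nra|]. field_simplify; nra. }
    lra. Qed.

Definition gcdGe (U : R) (x y : nat) : R := if Rle_dec U (INR (Nat.gcd x y)) then 1 else 0.

Lemma gcdGe_nonneg U x y : 0 <= gcdGe U x y.
Proof. unfold gcdGe; destruct Rle_dec; lra. Qed.

Lemma lsum_inv_sqr_tail_le U M : 1 <= U ->
  lsum (seq 1 M) (fun g => (if Rle_dec U (INR g) then 1 else 0) * (/ INR g * / INR g))
  <= (if Rle_dec U (INR M) then 2 / U - / INR M else 0).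
Proof. intros HU. induction M.
  - simpl. destruct Rle_dec; simpl in *; lra.
  - rewrite seq_S, lsum_app. cbn [lsum]. replace (1 + M)%nat with (S M) by lia.
    pose proof (pos_INR M). rewrite S_INR in *.
    destruct (Rle_dec U (INR M + 1)) as [H1|H1]; destruct (Rle_dec U (INR M)) as [H2|H2]; try lra.
    + assert (0 < INR M) by lra.
      assert (/ (INR M + 1) * / (INR M + 1) <= / INR M - / (INR M + 1)).
      { apply (Rmult_le_reg_l (INR M * (INR M + 1) * (INR M + 1))). nra. field_simplify; nra. }
      lra.
    + assert (0 < INR M + 1) by lra.
      assert (/ (INR M + 1) <= / U) by (apply Rinv_le_contravar; lra).
      assert (/ (INR M + 1) * / (INR M + 1) <= / (INR M + 1)).
      { apply (Rmult_le_reg_l ((INR M + 1) * (INR M + 1))). nra. field_simplify; nra. }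
      unfold Rdiv. lra.
    Qed.

Lemma mean_gcdGe_le M U : (0 < M)%nat -> 1 <= U ->
  avg M (fun x => avg M (gcdGe U x)) <= 2 / U.
Proof. intros HM HU.
  apply Rle_trans with (avg M (fun x => avg M (fun y => lsum (seq 1 M) (fun g =>
     (if Rle_dec U (INR g) then 1 else 0) * (divInd g x * divInd g y))))).
  { apply avg_le; auto; intros x Hx; apply avg_le; auto; intros y Hy. unfold gcdGe.
    apply (weight_gcd_le_lsum M (fun g => if Rle_dec U (INR g) then 1 else 0)); try lia.
    intros g; destruct Rle_dec; lra. }
  rewrite (avg_ext _ _ (fun x => lsum (seq 1 M) (fun g => avg M (fun y =>
     (if Rle_dec U (INR g) then 1 else 0) * (divInd g x * divInd g y))))) by (intros; apply avg_lsum).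
  rewrite avg_lsum.
  eapply Rle_trans; [|eapply Rle_trans; [apply (lsum_inv_sqr_tail_le U M HU)|]].
  - apply lsum_le; intros g Hg. apply in_seq in Hg.
    rewrite (avg_ext _ _ (fun x => avg M (fun y => ((if Rle_dec U (INR g) then 1 else 0) * divInd g x) * divInd g y)))
      by (intros; apply avg_ext; intros; ring).
    rewrite avg_avg_mul, avg_scal. pose proof (avg_divInd_le M g HM ltac:(lia)).
    assert (0 <= avg M (divInd g)) by (apply avg_nonneg; auto; intros; apply divInd_bounds).
    rewrite Rmult_assoc. destruct Rle_dec; [|lra]. rewrite !Rmult_1_l. apply Rmult_le_compat; lra.
  - destruct Rle_dec; [|unfold Rdiv; assert (0 < / U) by (apply Rinv_0_lt_compat; lra); lra].
    assert (0 < INR M) by (apply lt_0_INR; lia). assert (0 < / INR M) by (apply Rinv_0_lt_compat; lra). lra. Qed.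

Definition maxGcdWith (x : nat) (r : list nat) : nat :=
  fold_right (fun y acc => Nat.max (Nat.gcd x y) acc) 0%nat r.

Lemma INR_max a b : INR (Nat.max a b) = Rmax (INR a) (INR b).
Proof. destruct (Nat.le_ge_cases a b).
  - rewrite Nat.max_r by auto. rewrite Rmax_right; auto. apply le_INR; auto.
  - rewrite Nat.max_l by auto. rewrite Rmax_left; auto. apply le_INR; auto. Qed.

Lemma maxGcdWith_ind_le U x r : 0 < U -> (if Rle_dec U (INR (maxGcdWith x r)) then 1 else 0) <= lsum r (gcdGe U x).
Proof. intros HU. induction r as [|a r IHr].
  - simpl. destruct Rle_dec as [Q|Q]; simpl in Q; lra.
  - assert (E : maxGcdWith x (a :: r) = Nat.max (Nat.gcd x a) (maxGcdWith x r)) by reflexivity.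
    rewrite E. cbn [lsum]. rewrite INR_max.
    assert (0 <= lsum r (gcdGe U x)) by (apply lsum_nonneg; intros; apply gcdGe_nonneg).
    pose proof (gcdGe_nonneg U x a).
    destruct (Rle_dec U (Rmax (INR (Nat.gcd x a)) (INR (maxGcdWith x r)))) as [H1|H1]; [|lra].
    unfold Rmax in H1. destruct (Rle_dec (INR (Nat.gcd x a)) (INR (maxGcdWith x r))).
    + destruct (Rle_dec U (INR (maxGcdWith x r))); lra.
    + assert (gcdGe U x a = 1) by (unfold gcdGe; destruct (Rle_dec U (INR (Nat.gcd x a))); [reflexivity|lra]). lra. Qed.

Lemma maxPairGcd_ind_le U t : 0 < U -> (if Rle_dec U (INR (maxPairGcd t)) then 1 else 0) <= pairSum (gcdGe U) t.
Proof. intros HU. induction t as [|a t IHt].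
  - simpl. destruct Rle_dec as [Q|Q]; simpl in Q; lra.
  - assert (E : maxPairGcd (a :: t) = Nat.max (maxGcdWith a t) (maxPairGcd t)) by reflexivity.
    rewrite E. cbn [pairSum]. rewrite INR_max. pose proof (maxGcdWith_ind_le U a t HU) as F.
    assert (0 <= pairSum (gcdGe U) t) by (apply pairSum_nonneg; apply gcdGe_nonneg).
    assert (0 <= lsum t (gcdGe U a)) by (apply lsum_nonneg; intros; apply gcdGe_nonneg).
    destruct (Rle_dec U (Rmax (INR (maxGcdWith a t)) (INR (maxPairGcd t)))) as [Q1|Q1]; [|lra].
    unfold Rmax in Q1. destruct (Rle_dec (INR (maxGcdWith a t)) (INR (maxPairGcd t))).
    + destruct (Rle_dec U (INR (maxPairGcd t))); lra.
    + destruct (Rle_dec U (INR (maxGcdWith a t))); lra. Qed.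

Lemma commonDiv_eq0 a x y : (0 < a)%nat -> (Nat.gcd x y < a)%nat -> commonDiv a x y = 0.
Proof. intros Ha Hg. unfold commonDiv. rewrite <- (Rmult_0_r (INR (length (seq a a)))), <- lsum_const.
  apply lsum_ext; intros d Hd. apply in_seq in Hd.
  destruct (divInd_cases d x) as [E|E]; [rewrite E; ring|].
  destruct (divInd_cases d y) as [E'|E']; [rewrite E'; ring|].
  apply divInd_eq1_iff in E. apply divInd_eq1_iff in E'. exfalso.
  assert (Nat.divide d (Nat.gcd x y)) by (apply Nat.gcd_greatest; tauto).
  assert (0 < Nat.gcd x y)%nat by (destruct (Nat.eq_dec (Nat.gcd x y) 0) as [Q|Q]; [apply Nat.gcd_eq_0 in Q; lia|lia]).
  apply Nat.divide_pos_le in H; lia. Qed.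

Lemma maxGcdWith_ge x r y : In y r -> (Nat.gcd x y <= maxGcdWith x r)%nat.
Proof. induction r; simpl; [tauto|]. intros [<-|H]; unfold maxGcdWith in *; simpl; [lia|]. specialize (IHr H); lia. Qed.

Lemma pairSum_commonDiv_eq0 a t : (0 < a)%nat -> (maxPairGcd t < a)%nat -> pairSum (commonDiv a) t = 0.
Proof. intros Ha. induction t; simpl; [auto|].
  change (fold_right (fun y acc => Nat.max (Nat.gcd a0 y) acc) 0%nat t) with (maxGcdWith a0 t).
  intros H. rewrite IHt by lia. rewrite Rplus_0_r.
  rewrite <- (Rmult_0_r (INR (length t))), <- lsum_const.
  apply lsum_ext; intros y Hy. apply commonDiv_eq0; auto. pose proof (maxGcdWith_ge a0 t y Hy). lia. Qed.

Lemma expect_pairSum_var_le M n c : (0 < M)%nat -> (2 <= n)%nat -> (forall x y, c x y = c y x) ->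
  let m := expect M n (pairSum c) in
  expect M n (fun t => (pairSum c t - m) * (pairSum c t - m))
  <= INR n * INR n / 2 * avg M (fun x => avg M (fun y => c x y * c x y))
     + INR n * INR n * INR n * avg M (fun y => avg M (c y) * avg M (c y)).
Proof.
  intros HM Hn Hsym m.
  assert (Hrn : 2 <= INR n) by (replace 2 with (INR 2) by (simpl; ring); apply le_INR; auto).
  set (mu := avg M (fun y => avg M (c y))).
  set (nu := avg M (fun y => avg M (c y) * avg M (c y))).
  set (tau := avg M (fun x => avg M (fun y => c x y * c x y))).
  assert (Hm : m = INR n * (INR n - 1) / 2 * mu) by (apply expect_pairSum; auto).
  assert (Htau : 0 <= tau).
  { apply avg_nonneg; auto; intros; apply avg_nonneg; auto; intros; apply Rle_0_sqr. }
  assert (Hnu : 0 <= nu) by (apply avg_nonneg; auto; intros; apply Rle_0_sqr).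
  rewrite (expect_ext _ _ _ (fun t => pairSum c t * pairSum c t + (-2 * m) * pairSum c t + m * m))
    by (intros; ring).
  rewrite !expect_plus, expect_scal, expect_const by auto.
  pose proof (expect_pairSum_sqr M n c HM Hsym) as Hsqr; cbv zeta beta in Hsqr. fold mu nu tau in Hsqr.
  rewrite Hsqr. fold m. rewrite Hm.
  assert (Hmu2 : 0 <= mu * mu) by apply Rle_0_sqr.
  assert (nn1 : 0 <= INR n * (INR n - 1)) by nra.
  (* (n-2)(n-3) <= n(n-1) for n >= 2: the fourth-order terms cancel up to a nonpositive remainder. *)
  assert (INR n * (INR n - 1) * (INR n - 2) * (INR n - 3) / 4 * (mu * mu)
          <= (INR n * (INR n - 1) / 2 * mu) * (INR n * (INR n - 1) / 2 * mu)).
  { replace ((INR n * (INR n - 1) / 2 * mu) * (INR n * (INR n - 1) / 2 * mu))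
      with (INR n * (INR n - 1) * (INR n * (INR n - 1)) / 4 * (mu * mu)) by field.
    apply Rmult_le_compat_r; auto. nra. }
  assert (INR n * (INR n - 1) / 2 * tau <= INR n * INR n / 2 * tau) by nra.
  assert (INR n * (INR n - 1) * (INR n - 2) * nu <= INR n * INR n * INR n * nu).
  { apply Rmult_le_compat_r; auto. nra. }
  lra.
Qed.

Lemma mean_sqr_commonDiv_le M a : (0 < M)%nat -> (0 < a)%nat ->
  avg M (fun x => avg M (fun y => commonDiv a x y * commonDiv a x y)) <= 8 / INR a.
Proof.
  intros HM Ha. assert (0 < INR a) by (apply lt_0_INR; lia).
  eapply Rle_trans; [apply mean_sqr_commonDiv_le_gcd; auto|].
  apply Rle_trans with (/ (INR a * INR a * INR a * INR a) * (8 * (INR a * INR a * INR a))).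
  - apply Rmult_le_compat_l; [left; apply Rinv_0_lt_compat; repeat apply Rmult_lt_0_compat; lra|].
    apply lsum_sqr_gcd_le; auto.
  - right; field; lra.
Qed.

Lemma mean_sqr_avg_commonDiv_le M a : (0 < M)%nat -> (0 < a)%nat ->
  avg M (fun y => avg M (commonDiv a y) * avg M (commonDiv a y))
  <= 8 * sqrt (2 * INR a) / (INR a * INR a).
Proof.
  intros HM Ha. assert (0 < INR a) by (apply lt_0_INR; lia).
  assert (Hinv : 0 < / (INR a * INR a * INR a * INR a)).
  { apply Rinv_0_lt_compat; repeat apply Rmult_lt_0_compat; lra. }
  eapply Rle_trans; [apply mean_sqr_avg_commonDiv_le_gcd; auto|].
  pose proof (harmonic_le_sqrt (2 * a)) as Hharm.
  rewrite mult_INR in Hharm. replace (INR 2) with 2 in Hharm by (simpl; ring).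
  apply Rle_trans with (/ (INR a * INR a * INR a * INR a) * (4 * (INR a * INR a) * (2 * sqrt (2 * INR a)))).
  - apply Rmult_le_compat_l; [lra|].
    eapply Rle_trans; [apply lsum_gcd_le; auto|].
    apply Rmult_le_compat_l; [nra|lra].
  - right; field; lra.
Qed.

Lemma expect_pairSum_commonDiv_ge M n a : (0 < a)%nat -> (4 * a <= M)%nat -> (2 <= n)%nat ->
  INR n * INR n / (64 * INR a) <= expect M n (pairSum (commonDiv a)).
Proof.
  intros Ha HaM Hn. rewrite expect_pairSum by lia.
  assert (Hra : 0 < INR a) by (apply lt_0_INR; lia).
  assert (Hrn : 2 <= INR n) by (replace 2 with (INR 2) by (simpl; ring); apply le_INR; auto).
  pose proof (mean_commonDiv_ge M a Ha HaM) as Hmu.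
  apply Rle_trans with (INR n * (INR n - 1) / 2 * / (16 * INR a)).
  - apply (Rmult_le_reg_l (64 * INR a)); [lra|]. field_simplify; nra.
  - apply Rmult_le_compat_l; [|auto]. apply Rmult_le_pos; nra.
Qed.

Lemma dev_pairSum_commonDiv_le M n a : (0 < a)%nat -> (4 * a <= M)%nat -> (2 <= n)%nat ->
  let m := expect M n (pairSum (commonDiv a)) in
  expect M n (fun t => (pairSum (commonDiv a) t - m) * (pairSum (commonDiv a) t - m)) / (m * m)
  <= 16384 * INR a / (INR n * INR n) + 32768 * sqrt (2 * INR a) / INR n.
Proof.
  intros Ha HaM Hn m.
  assert (HM : (0 < M)%nat) by lia.
  assert (Hra : 0 < INR a) by (apply lt_0_INR; lia).
  assert (Hrn : 2 <= INR n) by (replace 2 with (INR 2) by (simpl; ring); apply le_INR; auto).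
  pose proof (expect_pairSum_commonDiv_ge M n a Ha HaM Hn) as Hm. fold m in Hm.
  set (k := INR n * INR n / (64 * INR a)) in Hm.
  assert (Hk : 0 < k) by (unfold k; apply Rdiv_lt_0_compat; nra).
  pose proof (expect_pairSum_var_le M n (commonDiv a) HM Hn (commonDiv_sym a)) as Hvar.
  cbv zeta in Hvar. fold m in Hvar.
  pose proof (mean_sqr_commonDiv_le M a HM Ha) as Htau.
  pose proof (mean_sqr_avg_commonDiv_le M a HM Ha) as Hnu.
  set (V := expect M n (fun t => (pairSum (commonDiv a) t - m) * (pairSum (commonDiv a) t - m))) in *.
  set (Vb := INR n * INR n / 2 * (8 / INR a) + INR n * INR n * INR n * (8 * sqrt (2 * INR a) / (INR a * INR a))).
  assert (HV : V <= Vb).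
  { eapply Rle_trans; [exact Hvar|]. apply Rplus_le_compat.
    - apply Rmult_le_compat_l; [nra|exact Htau].
    - apply Rmult_le_compat_l; [nra|exact Hnu]. }
  assert (HV0 : 0 <= V).
  { unfold V. rewrite <- (expect_const M n 0) by auto. apply expect_le; auto. intros; apply Rle_0_sqr. }
  assert (Hmm : / (m * m) <= / (k * k)).
  { apply Rinv_le_contravar; [nra|]. apply Rmult_le_compat; lra. }
  apply Rle_trans with (Vb * / (k * k)).
  - unfold Rdiv. apply Rmult_le_compat; auto. left; apply Rinv_0_lt_compat; nra.
  - right. unfold Vb, k. field. nra.
Qed.

Lemma expect_pairSum_gcdGe_le M n U : (0 < M)%nat -> 1 <= U ->
  expect M n (pairSum (gcdGe U)) <= INR n * INR n / U.
Proof.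
  intros HM HU. rewrite expect_pairSum by auto.
  pose proof (mean_gcdGe_le M U HM HU) as Hpi.
  assert (0 <= avg M (fun x => avg M (gcdGe U x))).
  { apply avg_nonneg; auto; intros; apply avg_nonneg; auto; intros; apply gcdGe_nonneg. }
  assert (Hpairs : 0 <= INR n * (INR n - 1) / 2 <= INR n * INR n / 2).
  { destruct n; [simpl; lra|]. rewrite S_INR. pose proof (pos_INR n). nra. }
  apply Rle_trans with (INR n * INR n / 2 * (2 / U)).
  - apply Rmult_le_compat; lra.
  - right; field; lra.
Qed.

(* If max gcd < a the commonDiv pair sum vanishes and the Chebyshev term equals 1;
   if max gcd >= U the gcdGe pair sum is at least 1. *)
Lemma goodEvent_ind_ge eta N a m t : (0 < a)%nat -> 0 < m ->
  Rpower (INR N) (2 - eta) < INR a ->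
  1 - (pairSum (commonDiv a) t - m) * (pairSum (commonDiv a) t - m) / (m * m)
    - pairSum (gcdGe (Rpower (INR N) (2 + eta))) t
  <= (if goodEvent eta N t then 1 else 0).
Proof.
  intros Ha Hm HLa. set (U := Rpower (INR N) (2 + eta)).
  assert (HU : 0 < U) by (unfold U, Rpower; apply exp_pos).
  pose proof (maxPairGcd_ind_le U t HU) as HB.
  assert (0 <= pairSum (gcdGe U) t) by (apply pairSum_nonneg; apply gcdGe_nonneg).
  assert (0 <= (pairSum (commonDiv a) t - m) * (pairSum (commonDiv a) t - m) / (m * m)).
  { unfold Rdiv; apply Rmult_le_pos; [apply Rle_0_sqr|left; apply Rinv_0_lt_compat; nra]. }
  destruct (Nat.lt_ge_cases (maxPairGcd t) a) as [Hl|Hl].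
  - rewrite pairSum_commonDiv_eq0 by auto.
    replace ((0 - m) * (0 - m) / (m * m)) with 1 by (field; lra).
    destruct (goodEvent eta N t); lra.
  - apply le_INR in Hl. unfold goodEvent, Rltb. fold U.
    destruct (Rlt_dec (Rpower (INR N) (2 - eta)) (INR (maxPairGcd t))); [|lra].
    destruct (Rlt_dec (INR (maxPairGcd t)) U); simpl; [lra|].
    destruct (Rle_dec U (INR (maxPairGcd t))); lra.
Qed.

Lemma one_minus_expect_good_le M n a eta N : (0 < a)%nat -> (4 * a <= M)%nat -> (2 <= n)%nat ->
  Rpower (INR N) (2 - eta) < INR a -> 1 <= Rpower (INR N) (2 + eta) ->
  1 - expect M n (fun t => if goodEvent eta N t then 1 else 0)
  <= 16384 * INR a / (INR n * INR n) + 32768 * sqrt (2 * INR a) / INR n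
     + INR n * INR n / Rpower (INR N) (2 + eta).
Proof.
  intros Ha HaM Hn HLa HU.
  assert (HM : (0 < M)%nat) by lia.
  pose proof (dev_pairSum_commonDiv_le M n a Ha HaM Hn) as Hdev. cbv zeta in Hdev.
  set (X := pairSum (commonDiv a)) in *. set (m := expect M n X) in *.
  set (U := Rpower (INR N) (2 + eta)) in *.
  assert (Hm : 0 < m).
  { eapply Rlt_le_trans; [|apply expect_pairSum_commonDiv_ge; eauto].
    assert (0 < INR a) by (apply lt_0_INR; lia).
    assert (2 <= INR n) by (replace 2 with (INR 2) by (simpl; ring); apply le_INR; auto).
    apply Rdiv_lt_0_compat; nra. }
  assert (Hgood : expect M n (fun t => 1 + -1 * (/ (m * m) * ((X t - m) * (X t - m)) + pairSum (gcdGe U) t))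
                  <= expect M n (fun t => if goodEvent eta N t then 1 else 0)).
  { apply expect_le; auto. intros t. pose proof (goodEvent_ind_ge eta N a m t Ha Hm HLa).
    unfold Rdiv in *. fold U X in H. lra. }
  rewrite expect_plus, expect_scal, expect_plus, expect_scal, expect_const in Hgood by auto.
  pose proof (expect_pairSum_gcdGe_le M n U HM HU).
  unfold Rdiv at 1 in Hdev. lra.
Qed.

Lemma exp_le_mono x y : x <= y -> exp x <= exp y.
Proof. intros [H|H]; [left; apply exp_increasing; auto|subst; lra]. Qed.

Lemma sqrt_exp z : sqrt (exp (2 * z)) = exp z.
Proof.
  replace (2 * z) with (z + z) by ring. rewrite exp_plus. apply sqrt_square. left; apply exp_pos.
Qed.

Lemma INR_Zto_nat z : (0 <= z)%Z -> INR (Z.to_nat z) = IZR z.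
Proof. intros H. rewrite INR_IZR_INZ, Z2Nat.id; auto. Qed.

Lemma exists_nat_between D : 1 <= D -> exists a : nat, (0 < a)%nat /\ D < INR a <= 2 * D.
Proof.
  intros HD. destruct (archimed D) as [Hup1 Hup2].
  assert (Hup0 : (0 <= up D)%Z) by (apply le_IZR; lra).
  exists (Z.to_nat (up D)). rewrite INR_Zto_nat by auto.
  split; [|lra]. apply INR_lt. rewrite INR_Zto_nat by auto. simpl; lra.
Qed.

Lemma sampleMax_gt alpha N : exp (alpha * INR N) - 1 < INR (sampleMax alpha N).
Proof.
  unfold sampleMax. destruct (base_Int_part (exp (alpha * INR N))) as [H1 H2].
  pose proof (exp_pos (alpha * INR N)).
  assert (H0 : (-1 < Int_part (exp (alpha * INR N)))%Z) by (apply lt_IZR; lra).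
  rewrite INR_Zto_nat by lia. lra.
Qed.

Lemma error_terms_le N a e eta : (2 <= N)%nat -> 0 < e <= 1 -> e <= eta ->
  INR a <= 2 * Rpower (INR N) (2 - e) ->
  16384 * INR a / (INR N * INR N) + 32768 * sqrt (2 * INR a) / INR N
    + INR N * INR N / Rpower (INR N) (2 + eta)
  <= 98305 * Rpower (INR N) (- (e / 2)).
Proof.
  intros HN He Hee Ha.
  assert (HN2 : 2 <= INR N) by (replace 2 with (INR 2) by (simpl; ring); apply le_INR; auto).
  unfold Rpower in *. set (l := ln (INR N)) in *.
  assert (Hl : 0 < l) by (unfold l; rewrite <- ln_1; apply ln_increasing; lra).
  assert (HNl : INR N = exp l) by (unfold l; rewrite exp_ln; lra).
  set (D := exp ((2 - e) * l)) in *. set (s := e / 2).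
  assert (HD : 0 < D) by apply exp_pos. pose proof (pos_INR a).
  assert (Hes : exp (- e * l) <= exp (- s * l)) by (apply exp_le_mono; unfold s; nra).
  assert (T1 : INR a / (INR N * INR N) <= 2 * exp (- e * l)).
  { rewrite HNl, <- exp_plus. unfold Rdiv. rewrite <- exp_Ropp.
    replace (- (l + l)) with (- 2 * l) by ring.
    replace (- e * l) with ((2 - e) * l + - 2 * l) by ring. rewrite exp_plus. fold D.
    pose proof (exp_pos (-2 * l)). nra. }
  assert (T2 : sqrt (2 * INR a) / INR N <= 2 * exp (- s * l)).
  { assert (sqrt (2 * INR a) <= sqrt (4 * D)) by (apply sqrt_le_1; lra).
    assert (sqrt (4 * D) = 2 * exp ((1 - s) * l)).
    { rewrite sqrt_mult by lra. replace 4 with (2 * 2) by ring. rewrite sqrt_square by lra.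
      unfold D. replace ((2 - e) * l) with (2 * ((1 - s) * l)) by (unfold s; field).
      rewrite sqrt_exp. reflexivity. }
    rewrite HNl. unfold Rdiv. rewrite <- exp_Ropp.
    replace (- s * l) with ((1 - s) * l + - l) by ring. rewrite exp_plus.
    pose proof (exp_pos (- l)). nra. }
  assert (T3 : INR N * INR N / exp ((2 + eta) * l) <= exp (- s * l)).
  { rewrite HNl, <- exp_plus. unfold Rdiv. rewrite <- exp_Ropp, <- exp_plus.
    apply exp_le_mono. unfold s. nra. }
  (* 98305 = 2 * 16384 + 2 * 32768 + 1 *)
  replace (- (e / 2) * l) with (- s * l) by (unfold s; ring). lra.
Qed.

Lemma one_minus_probGood_le alpha eta N : 0 < eta -> (2 <= N)%nat ->
  8 * (INR N * INR N) + 1 <= exp (alpha * INR N) ->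
  1 - probGood alpha eta N <= 98305 * Rpower (INR N) (- (Rmin eta 1 / 2)).
Proof.
  intros Heta HN Hexp.
  set (e := Rmin eta 1).
  assert (He : 0 < e <= 1) by (unfold e, Rmin; destruct Rle_dec; lra).
  assert (Hee : e <= eta) by (unfold e, Rmin; destruct Rle_dec; lra).
  assert (HN1 : 1 <= INR N) by (replace 1 with (INR 1) by reflexivity; apply le_INR; lia).
  assert (HN0 : 0 < INR N) by lra.
  set (D := Rpower (INR N) (2 - e)).
  assert (HD1 : 1 <= D).
  { unfold D. rewrite <- (Rpower_O (INR N)) by lra. apply Rle_Rpower; lra. }
  assert (HDN : D <= INR N * INR N).
  { unfold D. replace (INR N * INR N) with (Rpower (INR N) 2).
    - apply Rle_Rpower; lra.
    - replace 2 with (INR 2) by (simpl; ring). rewrite Rpower_pow by lra. simpl; ring. }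
  destruct (exists_nat_between D HD1) as [a [Ha [HDa HaD]]].
  pose proof (sampleMax_gt alpha N) as HM.
  assert (H4a : (4 * a <= sampleMax alpha N)%nat).
  { apply Nat.lt_le_incl, INR_lt. rewrite mult_INR. simpl (INR 4). lra. }
  rewrite probGood_expect by lia.
  eapply Rle_trans; [apply one_minus_expect_good_le; eauto|].
  - eapply Rle_lt_trans; [|exact HDa]. apply Rle_Rpower; lra.
  - rewrite <- (Rpower_O (INR N)) by lra. apply Rle_Rpower; lra.
  - apply error_terms_le; auto.
Qed.

Lemma probGood_le_1 alpha eta N : probGood alpha eta N <= 1.
Proof.
  unfold probGood. set (l := tuples N (sampleMax alpha N)).
  pose proof (filter_length_le (goodEvent eta N) l) as Hle. apply le_INR in Hle.
  destruct (Nat.eq_dec (length l) 0) as [E0|E0].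
  - rewrite E0 in *. simpl in *. pose proof (pos_INR (length (filter (goodEvent eta N) l))).
    replace (INR (length (filter (goodEvent eta N) l))) with 0 by lra. unfold Rdiv; lra.
  - assert (0 < INR (length l)) by (apply lt_0_INR; lia).
    apply (Rmult_le_reg_r (INR (length l))); auto. unfold Rdiv. rewrite Rmult_assoc, Rinv_l by lra. lra.
Qed.

Lemma up_le_lt_INR r N : 0 < r -> (Z.to_nat (up r) <= N)%nat -> r < INR N.
Proof.
  intros Hr HN. destruct (archimed r) as [H1 H2].
  assert (H0 : (0 <= up r)%Z) by (apply le_IZR; lra).
  apply le_INR in HN. rewrite INR_Zto_nat in HN by auto. lra.
Qed.

Lemma Rpower_neg_eventually_lt s eps : 0 < s -> 0 < eps ->
  exists N0, forall N, (N0 <= N)%nat -> Rpower (INR N) (- s) < eps.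
Proof.
  intros Hs Heps. set (T := - ln eps / s).
  exists (Z.to_nat (up (exp T))). intros N HN.
  assert (HT : exp T < INR N) by (apply up_le_lt_INR; [apply exp_pos|auto]).
  assert (HlnN : T < ln (INR N)).
  { rewrite <- (ln_exp T). apply ln_increasing; [apply exp_pos|auto]. }
  unfold Rpower. rewrite <- (exp_ln eps) by lra. apply exp_increasing.
  unfold T in HlnN. apply (Rmult_lt_compat_l s) in HlnN; auto.
  replace (s * (- ln eps / s)) with (- ln eps) in HlnN by (field; lra). lra.
Qed.

Lemma square_le_exp alpha N : 0 < alpha -> (2 <= N)%nat -> 243 / (alpha * alpha * alpha) < INR N ->
  8 * (INR N * INR N) + 1 <= exp (alpha * INR N).
Proof. intros Ha HN HN'.
  assert (HN2 : 2 <= INR N) by (replace 2 with (INR 2) by (simpl; ring); apply le_INR; auto).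
  set (x := alpha * INR N / 3).
  assert (Hx : 0 < x) by (unfold x; nra).
  assert (E3 : exp (alpha * INR N) = exp x * exp x * exp x) by (rewrite <- !exp_plus; f_equal; unfold x; field).
  pose proof (exp_ineq1_le x).
  assert (Ha3 : 0 < alpha * alpha * alpha) by (repeat apply Rmult_lt_0_compat; lra).
  assert (243 <= alpha * alpha * alpha * INR N).
  { apply (Rmult_lt_compat_l (alpha * alpha * alpha)) in HN'; auto.
    replace (alpha * alpha * alpha * (243 / (alpha * alpha * alpha))) with 243 in HN' by (field; lra). lra. }
  assert (x * x * x <= exp x * exp x * exp x).
  { assert (x <= exp x) by lra. assert (0 <= x * x) by nra. apply Rmult_le_compat; [nra|lra| |lra]. apply Rmult_le_compat; lra. }
  assert (x * x * x = alpha * alpha * alpha * INR N * (INR N * INR N) / 27) by (unfold x; field).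
  assert (243 * (INR N * INR N) / 27 <= x * x * x).
  { rewrite H2. apply Rmult_le_compat_r; [lra|]. apply Rmult_le_compat_r; nra. }
  nra. Qed.

Lemma square_le_exp_eventually alpha : 0 < alpha ->
  exists N0, forall N, (N0 <= N)%nat -> 8 * (INR N * INR N) + 1 <= exp (alpha * INR N).
Proof.
  intros Ha. exists (Nat.max 2 (Z.to_nat (up (243 / (alpha * alpha * alpha))))). intros N HN.
  apply square_le_exp; [auto|lia|].
  apply up_le_lt_INR; [|lia]. apply Rdiv_lt_0_compat; [lra|]. repeat apply Rmult_lt_0_compat; lra.
Qed.

Theorem theorem1p1 (alpha : R) (halpha : 0 < alpha) (eta : R) (heta : 0 < eta) :
  Un_cv (fun N : nat => probGood alpha eta N) 1.
Proof.
  intros eps Heps.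
  assert (Hs : 0 < Rmin eta 1 / 2) by (unfold Rmin; destruct Rle_dec; lra).
  destruct (Rpower_neg_eventually_lt _ (eps / 98305) Hs) as [N1 H1]; [lra|].
  destruct (square_le_exp_eventually alpha halpha) as [N2 H2].
  exists (Nat.max 2 (Nat.max N1 N2)). intros N HN.
  pose proof (one_minus_probGood_le alpha eta N heta ltac:(lia) (H2 N ltac:(lia))) as Hlow.
  pose proof (probGood_le_1 alpha eta N) as Hup.
  specialize (H1 N ltac:(lia)).
  unfold R_dist. rewrite Rabs_left1 by lra. lra.
Qed.
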